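(* Let $f(x)=\frac12x^\top Ax$ with $A\in\mathbb{R}^{d\times d}$ symmetric, $\eta>0$, and let $(x_k,v_k)$ be the leapfrog iterates from $(x_0,v_0)$: $v_{k+1/2}=v_k-\frac\eta2\nabla f(x_k)$, $x_{k+1}=x_k+\eta v_{k+1/2}$, $v_{k+1}=v_{k+1/2}-\frac\eta2\nabla f(x_{k+1})$. Then for every $k\ge0$, $$x_k=\Big(\sum_{j=0}^kD_{j,k}(\eta^2A)^j\Big)x_0+\eta\Big(\sum_{j=0}^{k-1}E_{j,k}(\eta^2A)^j\Big)v_0,$$ where $D_{j,k}=(-1)^j\frac{k}{k+j}\binom{k+j}{2j}$ (with $D_{0,0}=1$) and $E_{j,k}=(-1)^j\binom{k+j}{2j+1}$. *)

From mathcomp Require Import all_boot all_order all_algebra.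
Set Implicit Arguments. Unset Strict Implicit. Unset Printing Implicit Defensive.
Import Order.TTheory GRing.Theory Num.Theory.
Local Open Scope ring_scope.

(* Gradient of the quadratic f(x) = 1/2 x^T A x, i.e. (1/2)(A + A^T) x.
   (For symmetric A this is A x.) *)
Definition grad_quad (R : realFieldType) (d : nat) (A : 'M[R]_d) (x : 'cV[R]_d)
  : 'cV[R]_d := (2^-1) *: ((A + A^T) *m x).

Definition leapfrog_step (R : realFieldType) (d : nat) (A : 'M[R]_d) (eta : R)
  (p : 'cV[R]_d * 'cV[R]_d) : 'cV[R]_d * 'cV[R]_d :=
  let x := p.1 in let v := p.2 in
  let vh := v - (eta / 2) *: grad_quad A x in
  let x' := x + eta *: vh in
  let v' := vh - (eta / 2) *: grad_quad A x' in
  (x', v').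

Definition leapfrog (R : realFieldType) (d : nat) (A : 'M[R]_d) (eta : R)
  (x0 v0 : 'cV[R]_d) (k : nat) : 'cV[R]_d * 'cV[R]_d :=
  iter k (leapfrog_step A eta) (x0, v0).

Definition Dcoef (R : realFieldType) (j k : nat) : R :=
  if (j == 0%N) && (k == 0%N) then 1
  else (-1) ^+ j * (k%:R / (k + j)%:R) * ('C(k + j, 2 * j))%:R.

Definition Ecoef (R : realFieldType) (j k : nat) : R :=
  (-1) ^+ j * ('C(k + j, (2 * j).+1))%:R.

From mathcomp Require Import all_boot all_order all_algebra.
From mathcomp Require Import ring lra zify.
Import Order.TTheory GRing.Theory Num.Theory.
Local Open Scope ring_scope.

(* With B = eta^2 A and A symmetric (so grad f(x) = A x), eliminating the
   velocity from the leapfrog scheme gives the Stoermer-Verlet two-step form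
       x_{k+2} = (2 - B) x_{k+1} - x_k,      x_1 = x_0 - B x_0 / 2 + eta v_0,
   so the iterates are determined by this recurrence and two initial values.

   Together with P_0 = 1, P_1 = 1 - B/2, Q_0 = 0, Q_1 = 1, uniqueness of
   solutions of a two-step recurrence yields x_k = P_k x_0 + eta Q_k v_0. *)

(* Second difference of Pascal's rule. *)
Lemma bin_second_diff n m :
  ('C(n.+2, m.+2) + 'C(n, m.+2) = 2 * 'C(n.+1, m.+2) + 'C(n, m))%N.
Proof. rewrite !binS; lia. Qed.

(* The Chebyshev recurrence for a table of naturals, with all terms carried
   to the side where they are nonnegative. *)
Definition nat_cheb_rec (g : nat -> nat -> nat) : Prop :=
  forall j k, (g j k.+2 + g j k =
               2 * g j k.+1 + (if j is j'.+1 then g j' k.+1 else 0))%N.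

Definition binE (j k : nat) : nat := 'C(k + j, (2 * j).+1).

(* Unsigned, doubled D-coefficients: 2 |D_{j,k}| = C(k+j,2j) + C(k-1+j,2j). *)
Definition binD (j k : nat) : nat := ('C(k + j, 2 * j) + 'C(k.-1 + j, 2 * j))%N.

Lemma binE_cheb : nat_cheb_rec binE.
Proof.
move=> [|j] k; rewrite /binE; first by rewrite !muln0 !addn0 !bin1; lia.
have -> : ((2 * j.+1).+1 = (2 * j).+1.+2)%N by lia.
rewrite !addnS !addSn.
have := bin_second_diff (k + j).+2 (2 * j).+1.
have := bin_second_diff (k + j).+1 (2 * j).+1.
lia.
Qed.

Lemma binD_cheb : nat_cheb_rec binD.
Proof.
move=> [|j] k; rewrite /binD; first by rewrite !muln0 !bin0.
have -> : (2 * j.+1 = (2 * j).+2)%N by lia.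
rewrite !addnS /=; case: k => [|k] /=.
- rewrite !add0n; case: j => [|[|j]] //=; rewrite !bin_small; lia.
- rewrite !addSn.
  have := bin_second_diff (k + j).+2 (2 * j).
  have := bin_second_diff (k + j).+1 (2 * j).
  lia.
Qed.

Definition cheb_rec {R : pzRingType} (c : nat -> nat -> R) : Prop :=
  forall j k, c j k.+2 = 2 * c j k.+1
                         - (if j is j'.+1 then c j' k.+1 else 0) - c j k.

Lemma signed_cheb_rec (R : comPzRingType) (g : nat -> nat -> nat) (s : R) :
  nat_cheb_rec g -> cheb_rec (fun j k => (-1) ^+ j * (g j k)%:R * s).
Proof.
move=> hg j k; move/(congr1 (GRing.natmul (1 : R))): (hg j k).
rewrite !natrD => hjk.
have -> : (g j k.+2)%:R = (g j k.+1)%:R + ((g j k.+1)%:R + 0)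
          + (if j is j'.+1 then g j' k.+1 else 0)%:R - (g j k)%:R :> R.
  by rewrite -hjk addrK.
by case: j {hjk} => [|j] /=; rewrite ?exprS; ring.
Qed.

Section Coefficients.
Variable R : realFieldType.

(* D_{j,k} = (-1)^j (C(k+j,2j) + C(k-1+j,2j)) / 2, from
   2k C(k+j,2j) = (k+j) (C(k+j,2j) + C(k+j-1,2j)). *)
Lemma Dcoef_binD j k : Dcoef R j k = (-1) ^+ j * (binD j k)%:R * 2^-1.
Proof.
rewrite /Dcoef /binD; case: k => [|k].
  case: j => [|j] /=; first by rewrite !bin0 expr0; field.
  rewrite mul0r mulr0 mul0r add0n bin_small; last lia.
  by rewrite mulr0 mul0r.
rewrite andbF /=.
have hmul : ((2 * k.+1) * 'C(k.+1 + j, 2 * j)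
             = (k.+1 + j) * ('C(k.+1 + j, 2 * j) + 'C(k + j, 2 * j)))%N.
  have := mul_bin_down (k.+1 + j) (2 * j); rewrite !addSn /=.
  case: (leqP j k.+1) => hjk.
  - have -> : ((k + j).+1 - 2 * j = k.+1 - j)%N by lia.
    nia.
  - by rewrite !bin_small; lia.
move/(congr1 (GRing.natmul (1 : R))): hmul; rewrite !natrM => hmul.
have hkj : (k.+1 + j)%:R != 0 :> R by rewrite pnatr_eq0; lia.
have -> : ('C(k.+1 + j, 2 * j) + 'C(k + j, 2 * j))%:R
          = 2%:R * (k.+1)%:R * ('C(k.+1 + j, 2 * j))%:R / (k.+1 + j)%:R :> R.
  by rewrite hmul [X in X / _]mulrC mulfK.
field; apply: lt0r_neq0; have := ler0n R k; have := ler0n R j; lra.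
Qed.

Lemma Dcoef_cheb : cheb_rec (Dcoef R).
Proof.
move=> j k; rewrite !Dcoef_binD.
have := @signed_cheb_rec R binD 2^-1 binD_cheb j k.
by case: j => [|j] /=; rewrite ?Dcoef_binD.
Qed.

Lemma Ecoef_cheb : cheb_rec (Ecoef R).
Proof.
move=> j k; have := @signed_cheb_rec R binE 1 binE_cheb j k.
by case: j => [|j]; rewrite !mulr1.
Qed.

Lemma Dcoef_small j k : (k < j)%N -> Dcoef R j k = 0.
Proof.
move=> hkj; rewrite /Dcoef; have -> : (j == 0%N) = false by apply/eqP; lia.
by rewrite /= bin_small ?mulr0 //; lia.
Qed.

Lemma Ecoef_small j k : (k <= j)%N -> Ecoef R j k = 0.
Proof. by move=> hkj; rewrite /Ecoef bin_small ?mulr0 //; lia. Qed.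

End Coefficients.

Section MatrixPolynomials.
Context {R : comPzRingType} {d : nat} (B : 'M[R]_d).

Definition polysum (c : nat -> R) (n : nat) : 'M[R]_d :=
  \sum_(0 <= j < n) c j *: B ^+ j.

Lemma polysum0 c : polysum c 0 = 0.
Proof. by rewrite /polysum big_geq. Qed.

Lemma polysumS c n : polysum c n.+1 = polysum c n + c n *: B ^+ n.
Proof. by rewrite /polysum big_nat_recr. Qed.

Lemma polysum_shift c n :
  B *m polysum c n = polysum (fun j => if j is j'.+1 then c j' else 0) n.+1.
Proof.
rewrite /polysum big_nat_recl // scale0r add0r mulmx_sumr.
by apply: eq_bigr => j _; rewrite -scalemxAr mulmxE exprS.
Qed.

Lemma polysum_pad c n m :
  (n <= m)%N -> (forall j, (n <= j)%N -> c j = 0) -> polysum c n = polysum c m.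
Proof.
move=> hnm hc; rewrite /polysum [RHS](big_cat_nat _ hnm) //=.
rewrite [X in _ + X]big1_seq ?addr0 // => j /andP[_].
by rewrite mem_index_iota => /andP[hj _]; rewrite hc // scale0r.
Qed.

Lemma polysum_comb c c1 c2 c3 n :
  (forall j, c j = 2 * c1 j - c2 j - c3 j) ->
  polysum c n = 2 *: polysum c1 n - polysum c2 n - polysum c3 n.
Proof.
move=> hc; rewrite /polysum scaler_sumr -!sumrB.
by apply: eq_bigr => j _; rewrite hc !scalerBl scalerA.
Qed.

Lemma polysum_cheb (c : nat -> nat -> R) (o : nat) :
  cheb_rec c -> (forall j k, (k + o <= j)%N -> c j k = 0) ->
  forall k, polysum (c ^~ k.+2) (k.+2 + o)
            = 2 *: polysum (c ^~ k.+1) (k.+1 + o)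
              - B *m polysum (c ^~ k.+1) (k.+1 + o)
              - polysum (c ^~ k) (k + o).
Proof.
move=> hrec hsupp k.
rewrite polysum_shift (@polysum_pad (c ^~ k.+1) (k.+1 + o) (k.+2 + o));
  last (by move=> j; exact: hsupp); last by lia.
rewrite (@polysum_pad (c ^~ k) (k + o) (k.+2 + o));
  last (by move=> j; exact: hsupp); last by lia.
exact: polysum_comb.
Qed.

Lemma two_step_combination (P Q : nat -> 'M[R]_d) (x y : 'cV[R]_d) :
  (forall k, P k.+2 = 2 *: P k.+1 - B *m P k.+1 - P k) ->
  (forall k, Q k.+2 = 2 *: Q k.+1 - B *m Q k.+1 - Q k) ->
  forall k, P k.+2 *m x + Q k.+2 *m y
            = 2 *: (P k.+1 *m x + Q k.+1 *m y)
              - B *m (P k.+1 *m x + Q k.+1 *m y) - (P k *m x + Q k *m y).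
Proof.
move=> hP hQ k; rewrite hP hQ !mulmxBl -!scalemxAl !mulmxDr !mulmxA.
move: (P k.+1 *m x) (Q k.+1 *m y) (B *m P k.+1 *m x) (B *m Q k.+1 *m y).
move: (P k *m x) (Q k *m y) => p0 q0 p1 q1 bp1 bq1.
by apply/matrixP => i j; rewrite !mxE; ring.
Qed.

End MatrixPolynomials.

Section ClosedFormPolynomials.
Context {R : realFieldType} {d : nat} (B : 'M[R]_d).

Definition Dpoly (k : nat) : 'M[R]_d := polysum B (Dcoef R ^~ k) k.+1.
Definition Epoly (k : nat) : 'M[R]_d := polysum B (Ecoef R ^~ k) k.

Lemma Dpoly_two_step k : Dpoly k.+2 = 2 *: Dpoly k.+1 - B *m Dpoly k.+1 - Dpoly k.
Proof.
have hsupp j m : (m + 1 <= j)%N -> Dcoef R j m = 0.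
  by rewrite addn1; exact: Dcoef_small.
by have := polysum_cheb B _ _ (Dcoef_cheb R) hsupp k; rewrite !addn1.
Qed.

Lemma Epoly_two_step k : Epoly k.+2 = 2 *: Epoly k.+1 - B *m Epoly k.+1 - Epoly k.
Proof.
have hsupp j m : (m + 0 <= j)%N -> Ecoef R j m = 0.
  by rewrite addn0; exact: Ecoef_small.
by have := polysum_cheb B _ _ (Ecoef_cheb R) hsupp k; rewrite !addn0.
Qed.

Lemma Dpoly0 : Dpoly 0 = 1%:M.
Proof. by rewrite /Dpoly polysumS polysum0 add0r expr0 /Dcoef /= scale1r. Qed.

Lemma Dpoly1 : Dpoly 1 = 1%:M - 2^-1 *: B.
Proof.
rewrite /Dpoly !polysumS polysum0 add0r expr0 expr1 /Dcoef /=.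
rewrite addn0 addn1 muln0 muln1 bin0 binn expr0 expr1 divr1 div1r.
by rewrite mul1r !mulr1 mulN1r scale1r scaleNr.
Qed.

Lemma Epoly0 : Epoly 0 = 0.
Proof. exact: polysum0. Qed.

Lemma Epoly1 : Epoly 1 = 1%:M.
Proof.
rewrite /Epoly polysumS polysum0 add0r expr0 /Ecoef /= muln0 addn0 binn.
by rewrite expr0 mul1r scale1r.
Qed.

End ClosedFormPolynomials.

Lemma two_step_rec_unique (T : Type) (F : T -> T -> T) (u w : nat -> T) :
  (forall k, u k.+2 = F (u k.+1) (u k)) ->
  (forall k, w k.+2 = F (w k.+1) (w k)) ->
  u 0%N = w 0%N -> u 1%N = w 1%N -> forall k, u k = w k.
Proof.
move=> hu hw h0 h1 k.
suff [] : u k = w k /\ u k.+1 = w k.+1 by [].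
by elim: k => [|k [ihk ihk1]] //; rewrite hu hw ihk ihk1.
Qed.

Lemma grad_quad_sym (R : realFieldType) d (A : 'M[R]_d) x :
  A^T = A -> grad_quad A x = A *m x.
Proof.
move=> hA; rewrite /grad_quad hA mulmxDl scalerDr -scalerDl.
have -> : (2^-1 + 2^-1 : R) = 1 by field.
by rewrite scale1r.
Qed.

Section Leapfrog.
Variables (R : realFieldType) (d : nat) (A : 'M[R]_d) (eta : R).
Variables (x0 v0 : 'cV[R]_d).
Hypothesis hA : A^T = A.

Let B := eta ^+ 2 *: A.
Let X k := (leapfrog A eta x0 v0 k).1.
Let W k := eta *: (leapfrog A eta x0 v0 k).2.

Lemma leapfrog_pos_step k : X k.+1 = X k - 2^-1 *: (B *m X k) + W k.
Proof.
rewrite /X /W /B /leapfrog iterS /leapfrog_step /= grad_quad_sym // -scalemxAl.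
apply/matrixP => i j; rewrite !mxE; ring.
Qed.

Lemma leapfrog_vel_step k :
  W k.+1 = W k - 2^-1 *: (B *m X k) - 2^-1 *: (B *m X k.+1).
Proof.
rewrite /X /W /B /leapfrog iterS /leapfrog_step /= !grad_quad_sym // -!scalemxAl.
apply/matrixP => i j; rewrite !mxE; ring.
Qed.

Lemma leapfrog_two_step k : X k.+2 = 2 *: X k.+1 - B *m X k.+1 - X k.
Proof.
have hW : W k = X k.+1 - X k + 2^-1 *: (B *m X k).
  rewrite leapfrog_pos_step; move: (X k) (W k) (B *m X k) => a w b.
  by apply/matrixP => i j; rewrite !mxE; ring.
rewrite leapfrog_pos_step leapfrog_vel_step hW.
move: (X k.+1) (X k) => a1 a0; move: (B *m a1) (B *m a0) => b1 b0.
by apply/matrixP => i j; rewrite !mxE; field.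
Qed.

End Leapfrog.

Theorem lemma12 (R : realFieldType) (d : nat) (A : 'M[R]_d) (eta : R)
  (x0 v0 : 'cV[R]_d) (hA : A^T = A) (heta : 0 < eta) (k : nat) :
  (leapfrog A eta x0 v0 k).1 =
    (\sum_(0 <= j < k.+1) Dcoef R j k *: (eta ^+ 2 *: A) ^+ j) *m x0
    + eta *: ((\sum_(0 <= j < k) Ecoef R j k *: (eta ^+ 2 *: A) ^+ j) *m v0).
Proof.
set B := eta ^+ 2 *: A.
pose closed_form n := Dpoly B n *m x0 + Epoly B n *m (eta *: v0).
suff -> : (leapfrog A eta x0 v0 k).1 = closed_form k by rewrite /closed_form scalemxAr.
pose two_step (a b : 'cV[R]_d) := 2 *: a - B *m a - b.
apply: (@two_step_rec_unique _ two_step (fun n => (leapfrog A eta x0 v0 n).1)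
          closed_form) => [n|n||].
- exact: leapfrog_two_step.
- exact: two_step_combination (Dpoly_two_step B) (Epoly_two_step B) n.
- by rewrite /closed_form Dpoly0 Epoly0 mul1mx mul0mx addr0.
- rewrite leapfrog_pos_step // /closed_form Dpoly1 Epoly1 mulmxBl !mul1mx.
  by rewrite /= -!scalemxAl.
Qed.
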